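(* Let $\Gamma=(Q,A,E,(\delta_e)_{e\in E})$ be an MEMDP, $q\in Q$, and $W$ a parity objective. Then $$\sup_{\tau\in\mathcal D(\mathrm{Strat}(Q,A))}\inf_{b\in\mathcal D(E)}\mathrm{val}^{\mathrm{pr}}_q(\Gamma,b,\tau,W)=\inf_{b\in\mathcal D(E)}\sup_{\tau\in\mathcal D(\mathrm{Strat}(Q,A))}\mathrm{val}^{\mathrm{pr}}_q(\Gamma,b,\tau,W),$$ and consequently $\sup_{\tau\in\mathcal D(\mathrm{Strat}(Q,A))}\mathrm{val}^{\mathrm{uni}}_q(\Gamma,\tau,W)=\inf_{b\in\mathcal D(E)}\mathrm{val}^{\mathrm{pr}}_q(\Gamma,b,W)$.
   Context: $\mathcal D(X)$ is the set of distributions on $X$ with countable support. An MDP $G=(Q,A,\delta)$ has finite non-empty $Q,A$ and $\delta:Q\times A\to\mathcal D(Q)$; strategies are maps $\sigma:Q\cdot(A\cdot Q)^*\to\mathcal D(A)$, $\mathrm{Strat}(Q,A)$ is their set, and $\mathbb P^\sigma_q[G,\cdot]$ is the induced probability measure on infinite runs from $q$ (infinite state sequences measured by projection). A mixed strategy is $\tau\in\mathcal D(\mathrm{Strat}(Q,A))$ (countable support), with $\mathbb P^\tau_q[G,\cdot]:=\sum_\sigma\tau(\sigma)\mathbb P^\sigma_q[G,\cdot]$. A parity objective given by $f:Q\to\mathbb N$ is the set of infinite state sequences whose maximal label seen infinitely often is even. An MEMDP is $\Gamma=(Q,A,E,(\delta_e)_{e\in E})$ with $E$ finite non-empty and each $\Gamma[e]=(Q,A,\delta_e)$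 an MDP. For a (mixed or not) strategy $\tau$: $\mathrm{val}^{\mathrm{pr}}_q(\Gamma,b,\tau,W)=\sum_e b(e)\mathbb P^\tau_q[\Gamma[e],W]$, $\mathrm{val}^{\mathrm{uni}}_q(\Gamma,\tau,W)=\min_e\mathbb P^\tau_q[\Gamma[e],W]$; $\mathrm{val}^{\mathrm{pr}}_q(\Gamma,b,W)=\sup_{\sigma\in\mathrm{Strat}(Q,A)}\mathrm{val}^{\mathrm{pr}}_q(\Gamma,b,\sigma,W)$. *)

From HB Require Import structures.
From mathcomp Require Import all_boot all_order all_algebra.
From mathcomp Require Import all_classical all_reals all_analysis.

Set Implicit Arguments.
Unset Strict Implicit.
Unset Printing Implicit Defensive.

Import Order.TTheory GRing.Theory Num.Theory.
Local Open Scope classical_set_scope.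
Local Open Scope ring_scope.

Definition is_fdist (R : realType) (X : finType) (p : X -> R) : Prop :=
  (forall x, 0 <= p x) /\ \sum_(x : X) p x = 1.

Definition is_MEMDP (R : realType) (Q A E : finType)
  (delta : E -> Q -> A -> Q -> R) : Prop :=
  forall e q a, is_fdist (delta e q a).

(* Histories Q.(A.Q)^* are encoded as (q0, [:: (a1,q1); ...; (an,qn)]).
   A strategy maps a history to a distribution on A. *)
Definition strat (R : realType) (Q A : finType) := Q -> seq (A * Q) -> A -> R.

Definition is_strat (R : realType) (Q A : finType) (s : strat R Q A) : Prop :=
  forall q0 h, is_fdist (s q0 h).

(* Probability, in the MDP with transition function delta_e, starting from
   history (q0, h), that the next visited states are exactly ss
   (actions are summed out, i.e. we measure state sequences by projection). *)
Fixpoint cyl_prob (R : realType) (Q A : finType) (delta_e : Q -> A -> Q -> R)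
  (s : strat R Q A) (q0 : Q) (h : seq (A * Q)) (ss : seq Q) : R :=
  match ss with
  | [::] => 1
  | s' :: ss' =>
      \sum_(a : A) s q0 h a * delta_e (last q0 [seq x.2 | x <- h]) a s'
                   * cyl_prob delta_e s q0 (rcons h (a, s')) ss'
  end.

(* Infinite state sequences (runs); the point is only needed for the
   pointedType structure required by generated sigma-algebras. *)
Definition runT (Q : finType) (pt : Q) := nat -> Q.
HB.instance Definition _ (Q : finType) (pt : Q) := Choice.on (runT pt).
HB.instance Definition _ (Q : finType) (pt : Q) :=
  isPointed.Build (runT pt) (fun _ => pt).

Definition cyl (Q : finType) (pt : Q) (p : seq Q) : set (runT pt) :=
  [set w | forall i, (i < size p)%N -> w i = nth pt p i].
Arguments cyl {Q} pt p.

Definition cylinders (Q : finType) (pt : Q) : set (set (runT pt)) :=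
  range (cyl pt).
Arguments cylinders {Q} pt.

Definition runs (Q : finType) (pt : Q) := g_sigma_algebraType (cylinders pt).
Arguments runs {Q} pt.

(* P is the probability measure P^s_q[G_e, .] on runs: it is determined
   (Caratheodory) by its values on cylinders. *)
Definition is_run_measure (R : realType) (Q A : finType)
  (delta_e : Q -> A -> Q -> R) (s : strat R Q A) (q : Q)
  (P : probability (runs q) R) : Prop :=
  forall (s0 : Q) (ss : seq Q),
    P (cyl q (s0 :: ss)) = (((s0 == q)%:R * cyl_prob delta_e s s0 [::] ss)%R)%:E.
Arguments is_run_measure {R Q A} delta_e s q P.

Definition parity_obj (Q : finType) (pt : Q) (f : Q -> nat) : set (runs pt) :=
  [set w : runT pt | exists m : nat, ~~ odd m /\
     (forall N, exists n, (N <= n)%N /\ f (w n) = m) /\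
     (exists N, forall n, (N <= n)%N -> (f (w n) <= m)%N)].
Arguments parity_obj {Q} pt f.

Definition is_mixed (R : realType) (Q A : finType) (tau : strat R Q A -> R) : Prop :=
  [/\ (forall s, 0 <= tau s),
      (forall s, tau s != 0 -> is_strat s),
      countable [set s | tau s != 0] &
      (\esum_(s in [set s | tau s != 0%R]) (tau s)%:E = 1)%E].

Local Open Scope ereal_scope.

Definition Pmix (R : realType) (Q A : finType) (q : Q)
  (Pe : strat R Q A -> probability (runs q) R) (tau : strat R Q A -> R)
  (W : set (runs q)) : \bar R :=
  \esum_(s in [set s | tau s != 0%R]) (tau s)%:E * Pe s W.

Definition valpr_mixed (R : realType) (Q A E : finType) (q : Q)
  (P : E -> strat R Q A -> probability (runs q) R) (b : E -> R)
  (tau : strat R Q A -> R) (W : set (runs q)) : \bar R :=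
  \sum_(e : E) (b e)%:E * Pmix (P e) tau W.

Definition valuni_mixed (R : realType) (Q A E : finType) (q : Q)
  (P : E -> strat R Q A -> probability (runs q) R)
  (tau : strat R Q A -> R) (W : set (runs q)) : \bar R :=
  ereal_inf [set Pmix (P e) tau W | e in [set: E]].

Definition valpr (R : realType) (Q A E : finType) (q : Q)
  (P : E -> strat R Q A -> probability (runs q) R) (b : E -> R)
  (W : set (runs q)) : \bar R :=
  ereal_sup [set \sum_(e : E) (b e)%:E * P e s W | s in [set s | is_strat s]].

(* Mixing strategies makes the vectors (P^tau[Gamma[e], W])_e of the mixed
   strategies tau a convex subset of R^E, and val^pr(b, tau) is the pairing of b
   with such a vector, so the first equality is a finite-dimensional minimax
   theorem.  Let c = sup_tau min_e P^tau[Gamma[e], W].  No vector of the convex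
   set lies strictly above c in every coordinate, hence a distribution b
   separates the set from that open orthant (by induction on the number of
   coordinates, the planar case being a supremum-of-slopes argument), and then
   sup_tau val^pr(b, tau) <= c.  For the second equality, inf_b of a pairing is
   the least coordinate, and a mixed strategy is worth no more than the best pure
   one. *)

From HB Require Import structures.
From mathcomp Require Import all_boot all_order all_algebra.
From mathcomp Require Import all_classical all_reals all_analysis.
From mathcomp Require Import ring lra.

Import Order.TTheory GRing.Theory Num.Theory.
Set Implicit Arguments.
Unset Strict Implicit.
Unset Printing Implicit Defensive.
Local Open Scope classical_set_scope.
Local Open Scope ring_scope.

Section FiniteMinimax.
Variable R : realType.

Definition convex_family (T I : Type) (V : set T) (val : T -> I -> R) :=
  forall p1 p2 t, V p1 -> V p2 -> 0 <= t <= 1 ->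
  exists2 p, V p & forall i, val p i = t * val p1 i + (1 - t) * val p2 i.

Lemma convex_family_affine (T I J : Type) (V : set T) (val : T -> I -> R)
    (phi : (I -> R) -> J -> R) :
  (forall u v t j, phi (fun i => t * u i + (1 - t) * v i) j
                   = t * phi u j + (1 - t) * phi v j) ->
  convex_family V val -> convex_family V (fun p => phi (val p)).
Proof.
move=> phi_affine cvxV p1 p2 t V1 V2 t01; have [p Vp val_p] := cvxV p1 p2 t V1 V2 t01.
by exists p => // j; rewrite (funext val_p) phi_affine.
Qed.

Lemma convex_family_pos (T I : Type) (V : set T) (val : T -> I -> R) (J : set I) :
  convex_family V val -> convex_family [set p | V p /\ forall i, J i -> 0 < val p i] val.
Proof.
move=> cvxV p1 p2 t [V1 pos1] [V2 pos2] t01; have [p Vp val_p] := cvxV p1 p2 t V1 V2 t01.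
exists p => //; split => // i Ji; rewrite val_p.
by have := pos1 i Ji; have := pos2 i Ji; case/andP: t01 => t_ge0 t_le1; nra.
Qed.

Lemma segment_outside_open_quadrant (x1 y1 x2 y2 : R) :
  0 < x1 -> y1 <= 0 -> 0 < y2 -> x2 <= 0 ->
  (forall t, 0 <= t <= 1 ->
     ~ (0 < t * x1 + (1 - t) * x2 /\ 0 < t * y1 + (1 - t) * y2)) ->
  y2 * x1 <= y1 * x2.
Proof.
move=> x1_gt0 y1_le0 y2_gt0 x2_le0 outside; rewrite leNgt; apply/negP => det_gt0.
set d1 := x1 - x2; set d2 := y2 - y1.
have d1_gt0 : 0 < d1 by rewrite /d1; lra.
have d2_gt0 : 0 < d2 by rewrite /d2; lra.
(* At this [t] both coordinates are positive multiples of [y2 x1 - y1 x2]. *)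
set t := (- x2 * d2 + y2 * d1) / (2 * d1 * d2).
have tx : t * x1 + (1 - t) * x2 = (y2 * x1 - y1 * x2) / (2 * d2).
  by rewrite /t /d1 /d2; field; rewrite !gt_eqF.
have ty : t * y1 + (1 - t) * y2 = (y2 * x1 - y1 * x2) / (2 * d1).
  by rewrite /t /d1 /d2; field; rewrite !gt_eqF.
apply: (outside t); last by rewrite tx ty; split; apply: divr_gt0; lra.
apply/andP; split.
  by rewrite /t divr_ge0 ?mulr_ge0 ?ltW // /d1 /d2; nra.
by rewrite /t ler_pdivrMr ?mulr_gt0 // /d1 /d2 mul1r; nra.
Qed.

Lemma open_quadrant_separation (T I : Type) (V : set T) (val : T -> I -> R)
    (i1 i2 : I) :
  convex_family V val -> (forall p, V p -> ~ (0 < val p i1 /\ 0 < val p i2)) ->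
  exists2 l, 0 <= l <= 1 & forall p, V p -> l * val p i1 + (1 - l) * val p i2 <= 0.
Proof.
move=> cvxV outside; set x := fun p => val p i1; set y := fun p => val p i2.
have x_le0 p : V p -> 0 < y p -> x p <= 0.
  by move=> Vp y_gt0; rewrite leNgt; apply/negP => x_gt0; apply: (outside p).
(* Points with [y > 0] (hence [x <= 0]) require [l >= y / (y - x)], points with
   [x > 0] (hence [y <= 0]) require [l <= y / (y - x)].  The least [l] meeting
   the first constraints is [sup L]; the cross inequality between points of the
   two kinds shows that it meets the second ones. *)
pose L := [set r : R | r = 0 \/ exists2 p, V p & 0 < y p /\ r = y p / (y p - x p)].
have L_le1 r : L r -> r <= 1.
  case=> [->|[p Vp [y_gt0 ->]]] //; have := x_le0 p Vp y_gt0 => xp_le0.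
  by rewrite ler_pdivrMr ?mul1r; lra.
have L0 : L 0 by left.
have supL : has_sup L by split; [exists 0 | exists 1 => r /L_le1].
have /andP[l_ge0 l_le1] : 0 <= sup L <= 1.
  apply/andP; split; first exact: sup_upper_bound.
  by apply: ge_sup; [exists 0 | move=> r /L_le1].
exists (sup L); first by rewrite l_ge0 l_le1.
move=> p Vp; rewrite -/(x p) -/(y p); have [y_gt0|y_le0] := ltP 0 (y p).
  have xp_le0 := x_le0 p Vp y_gt0; have : y p / (y p - x p) <= sup L.
    by apply: sup_upper_bound => //; right; exists p.
  by rewrite ler_pdivrMr; nra.
have [x_le0'|x_gt0] := leP (x p) 0; first nra.
suff : sup L <= - y p / (x p - y p).
  by rewrite ler_pdivlMr; lra.
apply: ge_sup; first by exists 0.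
move=> r [->|[p2 Vp2 [y2_gt0 ->]]]; first by apply: divr_ge0; lra.
have x2_le0 := x_le0 p2 Vp2 y2_gt0.
have cross : y p2 * x p <= y p * x p2.
  apply: segment_outside_open_quadrant => // t t01 [h1 h2].
  have [p' Vp' val_p'] := cvxV p p2 t Vp Vp2 t01.
  by apply: (outside p' Vp'); rewrite /x /y !val_p'.
rewrite ler_pdivrMr; last lra.
by rewrite mulrAC ler_pdivlMr; nra.
Qed.

Definition fdelta (I : eqType) (i0 : I) : I -> R := fun i => (i == i0)%:R.

Lemma is_fdist_delta (E : finType) (e0 : E) : is_fdist (fdelta e0).
Proof.
split=> [e|]; first by rewrite /fdelta; case: (e == e0).
by rewrite (bigD1 e0) //= /fdelta eqxx big1 ?addr0 // => e /negPf ->.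
Qed.

Lemma sum_fdelta (E : finType) (e0 : E) (w : E -> R) :
  \sum_e fdelta e0 e * w e = w e0.
Proof.
rewrite (bigD1 e0) //= /fdelta eqxx mul1r big1 ?addr0 // => e /negPf ->.
by rewrite mul0r.
Qed.

Definition merge_coord (I : eqType) (l : R) (i1 i2 : I) (w : I -> R) : I -> R :=
  fun i => if i == i1 then l * w i1 + (1 - l) * w i2 else w i.

Definition split_mass (I : eqType) (l : R) (i1 i2 : I) (b : I -> R) : I -> R :=
  fun i => if i == i1 then l * b i1 else if i == i2 then (1 - l) * b i1 else b i.

Lemma sum_split_mass (E : finType) (l : R) (e1 e2 : E) (b w : E -> R) :
  e1 != e2 -> b e2 = 0 ->
  \sum_e split_mass l e1 e2 b e * w e = \sum_e b e * merge_coord l e1 e2 w e.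
Proof.
move=> e12 b_e2; rewrite (bigD1 e1) // [RHS](bigD1 e1) //= /split_mass /merge_coord.
rewrite !eqxx (bigD1 e2) 1?eq_sym //= [in RHS](bigD1 e2) 1?eq_sym //=.
rewrite eq_sym (negbTE e12) eqxx b_e2 mul0r add0r addrA; congr (_ + _); first ring.
by apply: eq_bigr => e /andP[/negbTE -> /negbTE ->].
Qed.

Lemma is_fdist_split_mass (E : finType) (l : R) (e1 e2 : E) (b : E -> R) :
  0 <= l <= 1 -> e1 != e2 -> is_fdist b -> b e2 = 0 -> is_fdist (split_mass l e1 e2 b).
Proof.
move=> /andP[l_ge0 l_le1] e12 [b_ge0 b_sum1] b_e2; split.
  move=> e; rewrite /split_mass; case: ifP => _; first exact: mulr_ge0.
  by case: ifP => _ //; apply: mulr_ge0; rewrite ?subr_ge0.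
rewrite -b_sum1; under eq_bigr do rewrite -[split_mass _ _ _ _ _]mulr1.
rewrite sum_split_mass //; apply: eq_bigr => e _.
by rewrite /merge_coord; case: ifP => _; ring.
Qed.

Lemma fdist_separation (T : Type) (E : finType) (V : set T) (val : T -> E -> R)
    (S : {set E}) :
  (0 < #|S|)%N -> convex_family V val ->
  (forall p, V p -> ~ (forall e, e \in S -> 0 < val p e)) ->
  exists b, [/\ is_fdist b, (forall e, e \notin S -> b e = 0)
              & forall p, V p -> \sum_e b e * val p e <= 0].
Proof.
move=> S_gt0; have [n] : exists n, #|S| = n.+1 by exists #|S|.-1; rewrite prednK.
elim: n S val {S_gt0} => [|n IH] S val cardS cvxV not_pos.
  have [e0 S1] : exists e0, S = [set e0]%SET by apply/cards1P; rewrite cardS.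
  exists (fdelta e0); split; first exact: is_fdist_delta.
    by move=> e; rewrite S1 inE /fdelta => /negbTE ->.
  move=> p Vp; rewrite sum_fdelta leNgt; apply/negP => pos.
  by apply: (not_pos p Vp) => e; rewrite S1 inE => /eqP ->.
have [e1 e1S] : exists e1, e1 \in S by apply/card_gt0P; rewrite cardS.
have [e2 e2S1] : exists e2, e2 \in S :\ e1.
  by apply/card_gt0P; move: cardS; rewrite (cardsD1 e1) e1S add1n => -[->].
move: e2S1; rewrite in_setD1 => /andP[e21 e2S].
(* Separate the two coordinates [e1], [e2] on the points positive elsewhere,
   then merge them into [e1] and drop [e2]. *)
pose V2 := [set p | V p /\ forall e, e \in S :\: [set e1; e2]%SET -> 0 < val p e].
have [l l01 sep2] : exists2 l, 0 <= l <= 1 &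
    forall p, V2 p -> l * val p e1 + (1 - l) * val p e2 <= 0.
  apply: open_quadrant_separation; first exact: convex_family_pos.
  move=> p [Vp pos] [pos1 pos2]; apply: (not_pos p Vp) => e eS.
  have [->|ne1] := eqVneq e e1 => //; have [->|ne2] := eqVneq e e2 => //.
  by apply: pos; rewrite !inE negb_or ne1 ne2.
have cardS' : #|S :\ e2| = n.+1 by move: cardS; rewrite (cardsD1 e2) e2S add1n => -[].
have [|p Vp pos|b' [fdist_b' b'_out b'_sep]] :=
  IH (S :\ e2) (fun p => merge_coord l e1 e2 (val p)) cardS'.
- apply: convex_family_affine cvxV => u v t e.
  by rewrite /merge_coord; case: ifP => _; ring.
- have := pos e1; rewrite !inE /merge_coord eqxx eq_sym e21 e1S => /(_ isT).
  suff : V2 p by move/sep2; lra.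
  split=> // e; rewrite !inE negb_or => /andP[/andP[ne1 ne2] eS].
  by have := pos e; rewrite !inE ne2 eS /merge_coord (negbTE ne1); apply.
have b'_e2 : b' e2 = 0 by apply: b'_out; rewrite !inE eqxx.
have e12 : e1 != e2 by rewrite eq_sym.
exists (split_mass l e1 e2 b'); split.
- exact: is_fdist_split_mass.
- move=> e eS; rewrite /split_mass.
  have /negbTE -> : e != e1 by apply: contraNneq eS => ->.
  have /negbTE -> : e != e2 by apply: contraNneq eS => ->.
  by apply: b'_out; rewrite !inE negb_and eS orbT.
- by move=> p Vp; rewrite sum_split_mass //; exact: b'_sep.
Qed.

Local Open Scope ereal_scope.

Lemma sup_inf_le_inf_sup (T U : Type) (X : set T) (Y : set U) (F : T -> U -> \bar R) :
  ereal_sup [set ereal_inf [set F x y | y in Y] | x in X]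
  <= ereal_inf [set ereal_sup [set F x y | x in X] | y in Y].
Proof.
apply: ge_ereal_sup => _ [x Xx <-]; apply: le_ereal_inf_tmp => _ [y Yy <-].
apply: (@le_trans _ _ (F x y)); first by apply: ereal_inf_lbound; exists y.
by apply: ereal_sup_ubound; exists x.
Qed.

Lemma ereal_inf_attained (T : Type) (X : set T) (g : T -> \bar R) (x0 : T) :
  X x0 -> (forall x, X x -> g x0 <= g x) -> ereal_inf [set g x | x in X] = g x0.
Proof.
move=> Xx0 min_x0; apply/eqP; rewrite eq_le; apply/andP; split.
  by apply: ereal_inf_lbound; exists x0.
by apply: le_ereal_inf_tmp => _ [x Xx <-]; exact: min_x0.
Qed.

Lemma min_le_fdist_sum (E : finType) (b w : E -> R) (e : E) :
  is_fdist b -> (forall e', w e <= w e')%R -> (w e <= \sum_e' b e' * w e')%R.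
Proof.
move=> [b_ge0 b_sum] min_e; rewrite -[w e]mul1r -b_sum mulr_suml.
by apply: ler_sum => e' _; rewrite ler_wpM2l.
Qed.

Lemma ereal_inf_fdist_sum (E : finType) (w : E -> R) (e : E) :
  (forall e', w e <= w e')%R ->
  ereal_inf [set (\sum_e' b e' * w e')%:E | b in [set b | is_fdist b]] = (w e)%:E.
Proof.
move=> min_e; rewrite -(sum_fdelta e w).
apply: ereal_inf_attained; first exact: is_fdist_delta.
by move=> b fdist_b; rewrite sum_fdelta lee_fin min_le_fdist_sum.
Qed.

Lemma minimax_convex_family (T : Type) (E : finType) (V : set T) (val : T -> E -> R)
    (F : T -> (E -> R) -> \bar R) :
  (0 < #|E|)%N -> V !=set0 -> convex_family V val ->
  (forall p b, V p -> F p b = (\sum_e b e * val p e)%:E) ->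
  ereal_sup [set ereal_inf [set F p b | b in [set b | is_fdist b]] | p in V]
  = ereal_inf [set ereal_sup [set F p b | p in V] | b in [set b | is_fdist b]].
Proof.
move=> /card_gt0P[e0 _] [p0 Vp0] cvxV FE.
pose emin p := [arg min_(e < e0) val p e]%O.
have min_emin p e : (val p (emin p) <= val p e)%R.
  by rewrite /emin; case: arg_minP => // e' _; apply.
apply/eqP; rewrite eq_le sup_inf_le_inf_sup /=.
set c := ereal_sup _.
have c_ge p : V p -> (val p (emin p))%:E <= c.
  move=> Vp; rewrite -(ereal_inf_fdist_sum (min_emin p)).
  rewrite -(eq_imagel (fun b _ => FE p b Vp)).
  by apply: ereal_sup_ubound; exists p.
case cE : c (c_ge p0 Vp0) => [r| |] // _; last exact: leey.
case: (@fdist_separation _ _ V (fun p e => val p e - r)%R [set: E]%SET)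
    => [||p Vp pos|b [fdist_b _ sep]].
- by rewrite cardsT; apply/card_gt0P; exists e0.
- by apply: (convex_family_affine (phi := fun w e => w e - r)%R) cvxV => u v t e; ring.
- have := c_ge p Vp; have := pos (emin p) (finset.in_setT _).
  by rewrite cE lee_fin subr_gt0; lra.
apply: ge_ereal_inf; exists (ereal_sup [set F p b | p in V]); first by exists b.
apply: ge_ereal_sup => _ [p Vp <-]; rewrite FE // lee_fin; have := sep p Vp.
under eq_bigr do rewrite mulrBr.
by rewrite sumrB -mulr_suml fdist_b.2 mul1r subr_le0.
Qed.

End FiniteMinimax.

Section WeightedSums.
Variables (R : realType) (T : choiceType).
Local Open Scope ereal_scope.
Implicit Types (tau : T -> R) (g : T -> \bar R).

Lemma esumZl (I : set T) (r : R) g :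
  (0 <= r)%R -> (forall s, 0 <= g s) ->
  \esum_(s in I) r%:E * g s = r%:E * \esum_(s in I) g s.
Proof.
move=> r_ge0 g_ge0; rewrite /esum -ereal_supZl //; last first.
  by apply/set0P; exists (\sum_(s \in set0) g s); exists set0 => //; exact: fsets_set0.
congr ereal_sup; apply/seteqP; split => x.
  move=> [F IF <-]; exists (\sum_(s \in F) g s); first by exists F.
  by rewrite ge0_mule_fsumr.
by move=> [_ [F IF <-] <-]; exists F => //; rewrite ge0_mule_fsumr.
Qed.

Definition wsum tau g := \esum_(s in [set: T]) (tau s)%:E * g s.

Lemma esum_support tau g :
  \esum_(s in [set s | tau s != 0%R]) (tau s)%:E * g s = wsum tau g.
Proof.
rewrite esum_mkcond; apply: eq_esum => s _.
have [->|tau_s] := eqVneq (tau s) 0%R; first by rewrite mul0e if_same.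
by rewrite ifT // mem_set.
Qed.

Lemma wsum_convex tau1 tau2 g (t : R) :
  (forall s, 0 <= tau1 s)%R -> (forall s, 0 <= tau2 s)%R -> (0 <= t <= 1)%R ->
  (forall s, 0 <= g s) ->
  wsum (fun s => t * tau1 s + (1 - t) * tau2 s)%R g
  = t%:E * wsum tau1 g + (1 - t)%:E * wsum tau2 g.
Proof.
move=> tau1_ge0 tau2_ge0 /andP[t_ge0 t_le1] g_ge0.
have t'_ge0 : (0 <= 1 - t)%R by rewrite subr_ge0.
have term_ge0 tau : (forall s, 0 <= tau s)%R -> forall s, 0 <= (tau s)%:E * g s.
  by move=> tau_ge0 s; rewrite mule_ge0 ?lee_fin.
rewrite /wsum -!esumZl //; [|exact: term_ge0..].
rewrite -esumD => [|s _|s _]; last 2 first.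
- by rewrite mule_ge0 ?lee_fin //; exact: term_ge0.
- by rewrite mule_ge0 ?lee_fin //; exact: term_ge0.
apply: eq_esum => s _; rewrite EFinD ge0_muleDl ?lee_fin ?mulr_ge0 //.
by rewrite !EFinM !muleA.
Qed.

Lemma wsum_le tau g (M : \bar R) :
  (forall s, 0 <= tau s)%R -> wsum tau (fun=> 1) = 1 ->
  (forall s, tau s != 0%R -> g s <= M) -> 0 <= M -> wsum tau g <= M.
Proof.
move=> tau_ge0 tau_sum1 le_gM M_ge0.
have [M_fin|/fin_numPn[M_Ny|->]] := boolP (M \is a fin_num); last 2 first.
- by rewrite M_Ny in M_ge0.
- exact: leey.
apply: (@le_trans _ _ (wsum tau (fun=> M))).
  apply: le_esum => s _; have [->|tau_s] := eqVneq (tau s) 0%R; first by rewrite !mul0e.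
  by rewrite lee_wpmul2l ?lee_fin ?le_gM.
rewrite /wsum -(fineK M_fin).
rewrite (eq_esum (b := fun s => (fine M)%:E * ((tau s)%:E * 1))) => [|s _]; last first.
  by rewrite mule1 muleC.
rewrite esumZl ?fine_ge0 // => [|s]; last by rewrite mule_ge0 ?lee_fin.
by rewrite -/(wsum tau (fun=> 1)) tau_sum1 mule1.
Qed.

Lemma sum_wsum (E : finType) tau (b : E -> R) (g : E -> T -> \bar R) :
  (forall s, 0 <= tau s)%R -> (forall e, 0 <= b e)%R -> (forall e s, 0 <= g e s) ->
  \sum_e (b e)%:E * wsum tau (g e) = wsum tau (fun s => \sum_e (b e)%:E * g e s).
Proof.
move=> tau_ge0 b_ge0 g_ge0; rewrite /wsum.
rewrite [RHS](eq_esum (b := fun s => \sum_e (b e)%:E * ((tau s)%:E * g e s)));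
  last first.
  move=> s _; rewrite ge0_sume_distrr => [|e _]; last by rewrite mule_ge0 ?lee_fin.
  by apply: eq_bigr => e _; rewrite muleCA.
rewrite esum_sum => [|s e _ _]; last by rewrite !mule_ge0 ?lee_fin.
by apply: eq_bigr => e _; rewrite esumZl // => s; rewrite mule_ge0 ?lee_fin.
Qed.

End WeightedSums.

Lemma countableU (T : Type) (X Y : set T) :
  countable X -> countable Y -> countable (X `|` Y).
Proof.
move=> cX cY; have -> : X `|` Y = \bigcup_(i in [set: bool]) (if i then X else Y).
  apply/seteqP; split => [x [Xx|Yx]|x [[] _ ?]];
    [by exists true | by exists false | by left | by right].
by apply: bigcup_countable => [|[]]; first exact: countableP.
Qed.

Lemma is_strat_uniform (R : realType) (Q A : finType) :
  (0 < #|A|)%N -> is_strat (fun (_ : Q) _ (_ : A) => #|A|%:R^-1 : R).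
Proof.
move=> A_gt0 q0 h; split => [a|]; first by rewrite invr_ge0 ler0n.
by rewrite sumr_const -(mulr_natl _ #|xpredT|) mulfV // pnatr_eq0 -lt0n.
Qed.

Section MixedStrategies.
Variables (R : realType) (Q A E : finType) (q : Q).
Variables (P : E -> strat R Q A -> probability (runs q) R) (W : set (runs q)).
Hypothesis mW : measurable W.
Local Open Scope ereal_scope.
Implicit Types (tau : strat R Q A -> R) (Pe : strat R Q A -> probability (runs q) R).

Lemma Pmix_wsum Pe tau : Pmix Pe tau W = wsum tau (fun s => Pe s W).
Proof. exact: esum_support. Qed.

Lemma mixed_wsum1 tau : is_mixed tau -> wsum tau (fun=> 1) = 1.
Proof.
move=> [_ _ _ sum1]; rewrite -esum_support -[RHS]sum1.
by apply: eq_esum => s _; rewrite mule1.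
Qed.

Lemma mixed_support_strat tau : is_mixed tau -> exists2 s, tau s != 0%R & is_strat s.
Proof.
move=> [_ tau_strat _ tau_sum1]; apply: contrapT => no_support.
have := @lte01 R; rewrite -tau_sum1 esum1 ?ltxx // => s tau_s.
by exfalso; apply: no_support; exists s => //; exact: tau_strat.
Qed.

Lemma Pmix_ge0 Pe tau : is_mixed tau -> 0 <= Pmix Pe tau W.
Proof. by move=> [tau_ge0 _ _ _]; apply: esum_ge0 => s _; rewrite mule_ge0 ?lee_fin. Qed.

Lemma Pmix_le1 Pe tau : is_mixed tau -> Pmix Pe tau W <= 1.
Proof.
move=> mixed_tau; have [tau_ge0 _ _ _] := mixed_tau.
by rewrite Pmix_wsum wsum_le ?mixed_wsum1 // => s _; exact: probability_le1.
Qed.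

Lemma Pmix_fin_num Pe tau : is_mixed tau -> Pmix Pe tau W \is a fin_num.
Proof.
move=> mixed_tau; rewrite ge0_fin_numE ?Pmix_ge0 //.
by rewrite (le_lt_trans (Pmix_le1 Pe mixed_tau)) ?ltry.
Qed.

Lemma is_mixed_convex tau1 tau2 (t : R) :
  is_mixed tau1 -> is_mixed tau2 -> (0 <= t <= 1)%R ->
  is_mixed (fun s => t * tau1 s + (1 - t) * tau2 s)%R.
Proof.
move=> mixed1 mixed2 t01; have [ge0_1 strat1 count1 _] := mixed1.
have [ge0_2 strat2 count2 _] := mixed2; have /andP[t_ge0 t_le1] := t01.
have supp s : (t * tau1 s + (1 - t) * tau2 s != 0)%R -> tau1 s != 0%R \/ tau2 s != 0%R.
  have [->|] := eqVneq (tau1 s) 0%R; last by left.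
  by have [->|] := eqVneq (tau2 s) 0%R; [rewrite !mulr0 addr0 eqxx | right].
split.
- by move=> s; rewrite addr_ge0 ?mulr_ge0 ?subr_ge0.
- by move=> s /supp[/strat1|/strat2].
- exact: sub_countable (subset_card_le supp) (countableU count1 count2).
- rewrite (eq_esum (b := fun s => (t * tau1 s + (1 - t) * tau2 s)%:E * 1)) => [|s _];
    last by rewrite mule1.
  rewrite esum_support wsum_convex //.
  by rewrite !mixed_wsum1 // !mule1 -EFinD subrKC.
Qed.

Lemma Pmix_convex Pe tau1 tau2 (t : R) :
  is_mixed tau1 -> is_mixed tau2 -> (0 <= t <= 1)%R ->
  Pmix Pe (fun s => t * tau1 s + (1 - t) * tau2 s)%R W
  = t%:E * Pmix Pe tau1 W + (1 - t)%:E * Pmix Pe tau2 W.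
Proof.
move=> [ge0_1 _ _ _] [ge0_2 _ _ _] t01.
by rewrite !Pmix_wsum wsum_convex // => s; exact: measure_ge0.
Qed.

Definition dirac_strat (s0 : strat R Q A) : strat R Q A -> R :=
  fun s => (`[< s = s0 >])%:R.

Lemma dirac_strat_support s0 : [set s | dirac_strat s0 s != 0%R] = [set s0].
Proof.
apply/seteqP; split => s /=; last by move=> ->; rewrite /dirac_strat asboolT ?oner_neq0.
by rewrite /dirac_strat; case: asboolP => //; rewrite eqxx.
Qed.

Lemma is_mixed_dirac s0 : is_strat s0 -> is_mixed (dirac_strat s0).
Proof.
move=> strat_s0; split.
- by move=> s; rewrite /dirac_strat ler0n.
- by move=> s; rewrite /dirac_strat; case: asboolP => [-> //|_]; rewrite eqxx.
- by rewrite dirac_strat_support; exact: countable1.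
- by rewrite dirac_strat_support esum_set1 /dirac_strat asboolT ?lee01.
Qed.

Lemma Pmix_dirac Pe s0 : Pmix Pe (dirac_strat s0) W = Pe s0 W.
Proof.
by rewrite /Pmix dirac_strat_support esum_set1 /dirac_strat asboolT ?mul1e ?lee01.
Qed.

Definition mixed_value tau (e : E) : R := fine (Pmix (P e) tau W).

Lemma mixed_valueE tau e : is_mixed tau -> (mixed_value tau e)%:E = Pmix (P e) tau W.
Proof. by move=> mixed_tau; rewrite fineK ?Pmix_fin_num. Qed.

Lemma convex_mixed_value : convex_family [set tau | is_mixed tau] mixed_value.
Proof.
move=> tau1 tau2 t mixed1 mixed2 t01.
have mixed := is_mixed_convex mixed1 mixed2 t01.
exists (fun s => t * tau1 s + (1 - t) * tau2 s)%R => // e.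
apply: EFin_inj; rewrite mixed_valueE // Pmix_convex // -!mixed_valueE // -!EFinM -EFinD.
Qed.

Lemma valpr_mixedE b tau : is_mixed tau ->
  valpr_mixed P b tau W = (\sum_e b e * mixed_value tau e)%:E.
Proof.
move=> mixed_tau; rewrite /valpr_mixed -sumEFin; apply: eq_bigr => e _.
by rewrite EFinM mixed_valueE.
Qed.

Lemma minimax_mixed : (0 < #|A|)%N -> (0 < #|E|)%N ->
  ereal_sup [set ereal_inf [set valpr_mixed P b tau W | b in [set b | is_fdist b]]
            | tau in [set tau | is_mixed tau]]
  = ereal_inf [set ereal_sup [set valpr_mixed P b tau W | tau in [set tau | is_mixed tau]]
              | b in [set b | is_fdist b]].
Proof.
move=> A_gt0 E_gt0.
have mixed_exists : [set tau : strat R Q A -> R | is_mixed tau] !=set0.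
  exists (dirac_strat (fun _ _ _ => #|A|%:R^-1)%R).
  exact/is_mixed_dirac/is_strat_uniform.
apply: (minimax_convex_family (F := fun tau b => valpr_mixed P b tau W)) => //.
- exact: convex_mixed_value.
- by move=> tau b; exact: valpr_mixedE.
Qed.

Lemma valuni_mixedE tau : (0 < #|E|)%N -> is_mixed tau ->
  valuni_mixed P tau W = ereal_inf [set valpr_mixed P b tau W | b in [set b | is_fdist b]].
Proof.
move=> /card_gt0P[e0 _] mixed_tau.
have [e _ min_e] := @arg_minP _ _ E e0 xpredT (mixed_value tau) isT.
have {}min_e e' : (mixed_value tau e <= mixed_value tau e')%R by exact: min_e.
rewrite (eq_imagel (fun b _ => valpr_mixedE b mixed_tau)) (ereal_inf_fdist_sum min_e).
rewrite /valuni_mixed mixed_valueE //; apply: ereal_inf_attained => // e' _.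
by rewrite -!mixed_valueE // lee_fin min_e.
Qed.

Lemma valpr_mixed_le_valpr b tau : is_fdist b -> is_mixed tau ->
  valpr_mixed P b tau W <= valpr P b W.
Proof.
move=> [b_ge0 _] mixed_tau; have [tau_ge0 tau_strat _ _] := mixed_tau.
have P_ge0 e s : 0 <= P e s W by exact: measure_ge0.
rewrite /valpr_mixed (eq_bigr _ (fun e _ => congr1 _ (Pmix_wsum _ _))) sum_wsum //.
rewrite wsum_le ?mixed_wsum1 // => [s /tau_strat strat_s|].
  by apply: ereal_sup_ubound; exists s.
have [s _ strat_s] := mixed_support_strat mixed_tau.
apply: (@le_trans _ _ (\sum_e (b e)%:E * P e s W)).
  by rewrite sume_ge0 // => e _; rewrite mule_ge0 ?lee_fin.
by apply: ereal_sup_ubound; exists s.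
Qed.

Lemma valpr_sup_mixed b : is_fdist b ->
  valpr P b W = ereal_sup [set valpr_mixed P b tau W | tau in [set tau | is_mixed tau]].
Proof.
move=> fdist_b; apply/eqP; rewrite eq_le; apply/andP; split.
  apply: ge_ereal_sup => _ [s strat_s <-]; apply: ereal_sup_ubound.
  exists (dirac_strat s); first exact: is_mixed_dirac.
  by apply: eq_bigr => e _; rewrite Pmix_dirac.
by apply: ge_ereal_sup => _ [tau mixed_tau <-]; exact: valpr_mixed_le_valpr.
Qed.

End MixedStrategies.

Section ParityMeasurable.
Variables (Q : finType) (q : Q).

Lemma measurable_cyl (p : seq Q) : measurable (cyl q p : set (runs q)).
Proof. by apply: sub_sigma_algebra; exists p. Qed.

Lemma measurable_state_pred (n : nat) (S : pred Q) :
  measurable ([set w : runT q | S (w n)] : set (runs q)).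
Proof.
have -> : ([set w : runT q | S (w n)] : set (runs q)) =
    \bigcup_(p : seq Q) (if (size p == n.+1) && S (nth q p n) then cyl q p else set0).
  apply/seteqP; split => w /= => [S_wn|[p _]].
    exists (mkseq w n.+1) => //; rewrite size_mkseq eqxx nth_mkseq //= S_wn.
    by move=> i; rewrite size_mkseq => lt_in; rewrite nth_mkseq.
  by case: ifP => // /andP[/eqP size_p S_p] w_p; rewrite w_p ?size_p.
apply: countable_bigcupT_measurable; first exact: countableP.
by move=> p; case: ifP => _; [exact: measurable_cyl | exact: measurable0].
Qed.

Lemma measurable_parity_obj (f : Q -> nat) : measurable (parity_obj q f).
Proof.
have -> : parity_obj q f = \bigcup_(m in [set m | ~~ odd m])
    ((\bigcap_N \bigcup_(n in [set n | (N <= n)%N]) [set w : runT q | f (w n) == m])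
     `&` \bigcup_N \bigcap_(n in [set n | (N <= n)%N]) [set w : runT q | f (w n) <= m]%N).
  apply/seteqP; split => w /=.
    move=> [m [even_m [inf_m [N le_m]]]]; exists m => //; split; last by exists N.
    by move=> N' _; have [n [le_N'n /eqP f_m]] := inf_m N'; exists n.
  move=> [m even_m [inf_m [N _ le_m]]]; exists m; split => //; split; last by exists N.
  by move=> N'; have [n le_N'n /eqP f_m] := inf_m N' I; exists n.
apply: bigcup_measurable => m _; apply: measurableI.
  apply: bigcapT_measurable => N; apply: bigcup_measurable => n _.
  exact: (measurable_state_pred n (fun x => f x == m)).
apply: bigcupT_measurable => N; apply: bigcap_measurableType => n _.
exact: (measurable_state_pred n (fun x => f x <= m)%N).
Qed.

End ParityMeasurable.

Local Open Scope ereal_scope.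
Unset Implicit Arguments.

Theorem mainTheorem6 (R : realType) (Q A E : finType)
  (delta : E -> Q -> A -> Q -> R) (q : Q) (f : Q -> nat)
  (P : E -> strat R Q A -> probability (runs q) R)
  (hA : (0 < #|A|)%N) (hE : (0 < #|E|)%N)
  (hdelta : is_MEMDP delta)
  (hP : forall e s, is_strat s -> is_run_measure (delta e) s q (P e s)) :
  ereal_sup [set ereal_inf [set valpr_mixed P b tau (parity_obj q f)
                           | b in [set b | is_fdist b]]
            | tau in [set tau | is_mixed tau]]
  = ereal_inf [set ereal_sup [set valpr_mixed P b tau (parity_obj q f)
                             | tau in [set tau | is_mixed tau]]
              | b in [set b | is_fdist b]]
  /\
  ereal_sup [set valuni_mixed P tau (parity_obj q f) | tau in [set tau | is_mixed tau]]
  = ereal_inf [set valpr P b (parity_obj q f) | b in [set b | is_fdist b]].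
Proof.
have mW : measurable (parity_obj q f) by exact: measurable_parity_obj.
have minimax := minimax_mixed P mW hA hE.
split=> //.
rewrite (eq_imagel (fun tau (mixed_tau : is_mixed tau) => valuni_mixedE P mW hE mixed_tau)).
by rewrite (eq_imagel (fun b (fdist_b : is_fdist b) => valpr_sup_mixed P _ fdist_b)).
Qed.
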